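(* Let $(A,\mathcal H)$ be a left bialgebroid such that ${}_s\mathcal H$ is $A$-flat. (1) If $I$ is a left ideal two-sided coideal in $\mathcal H$ and $B:=\mathcal H^{\mathrm{co}\,\mathcal H/I}$, then $B=\mathcal H^{\mathrm{co}\,\mathcal H/\mathcal HB^+}$. (2) If $B$ is a right $\mathcal H$-comodule $A^o$-subring of $\mathcal H$ via $t$ and $I:=\mathcal HB^+$, then $I=\mathcal H\big(\mathcal H^{\mathrm{co}\,\mathcal H/I}\big)^+$.
   Context: $\Bbbk$ is a field. For a $\Bbbk$-algebra $A$, $A^o$ is its opposite. A left bialgebroid $(A,\mathcal H)$ consists of $\Bbbk$-algebras $A,\mathcal H$, algebra maps $s:A\to\mathcal H$, $t:A^o\to\mathcal H$ with commuting images, and $A$-bilinear maps $\Delta:\mathcal H\to\mathcal H\otimes_A\mathcal H$, $\varepsilon:\mathcal H\to A$ for the bimodule structure $a\cdot h\cdot b=s(a)t(b)h$, where $\mathcal H\otimes_A\mathcal H$ is the quotient of $\mathcal H\otimes\mathcal H$ by the span of $t(a)x\otimes y-x\otimes s(a)y$; such that $(\mathcal H,\Delta,\varepsilon)$ is a coassociative counital $A$-coring, $\Delta$ takes values in $\{\sum_ix_i\otimes_Ay_i:\sum_ix_it(a)\otimes_Ay_i=\sum_ix_i\otimes_Ay_is(a)\ \forall a\}$ and is an algebra map into it (factorwise product), $\varepsilon(xs(\varepsilon(y)))=\varepsilon(xy)=\varepsilon(xt(\varepsilon(y)))$, $\varepsilon(1)=1$. Write $\Delta(x)=\sum x_1\otimes_Ax_2$;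 $\mathcal H^+=\ker\varepsilon$, $B^+=B\cap\mathcal H^+$. ''${}_s\mathcal H$ is $A$-flat'': $\mathcal H$ is flat as left $A$-module via $s$. A left ideal two-sided coideal is a left ideal $I$ with $\varepsilon(I)=0$ and $\Delta(I)\subseteq$ image of $I\otimes_A\mathcal H+\mathcal H\otimes_AI$. For such $I$ with projection $\pi$, $\mathcal H^{\mathrm{co}\,\mathcal H/I}=\{x:\sum\pi(x_1)\otimes_Ax_2=\pi(1)\otimes_Ax\text{ in }\mathcal H/I\otimes_A\mathcal H\}$. A right $\mathcal H$-comodule $A^o$-subring via $t$ is a subalgebra $B\supseteq t(A)$ with a coassociative counital right $A$-linear coaction $\delta:B\to B\otimes_A\mathcal H$ ($B$ a right $A$-module via $b\cdot a=t(a)b$, $\mathcal H$ left via $s$) such that $(\iota\otimes_A\mathcal H)\delta=\Delta\iota$, $\iota$ the inclusion. (For such $B$, $\mathcal HB^+$ is a left ideal two-sided coideal.) *)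

(* Tensor products over A (which MathComp does not provide) are
   given by their standard presentation: formal finite sums  sum_i m_i (x) n_i
   (lists of pairs) modulo the congruence generated by biadditivity and
   A-balancing (and, for a quotient M/Z, killing m (x) n for m in Z). *)
From HB Require Import structures.
From mathcomp Require Import all_boot all_algebra.
Set Implicit Arguments. Unset Strict Implicit. Unset Printing Implicit Defensive.
Import GRing.Theory.
Local Open Scope ring_scope.

(* Balanced tensor product  (P/Z) (x)_R N  of (the submodule P of) a right
   R-module M, modulo a submodule Z, with a left R-module N.
   tens_eq ract lact P Z s s'  <->  the formal sums s, s' (all of whose first
   components lie in P) are equal in (P/Z) (x)_R N.                           *)
Section Tensor.
Variables (R : nzRingType) (M N : zmodType).
Variables (ract : M -> R -> M) (lact : R -> N -> N).
Variables (P : M -> Prop) (Z : M -> Prop).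

Inductive tens_eq : seq (M * N) -> seq (M * N) -> Prop :=
| tens_refl s : tens_eq s s
| tens_sym s s' : tens_eq s s' -> tens_eq s' s
| tens_trans s1 s2 s3 : tens_eq s1 s2 -> tens_eq s2 s3 -> tens_eq s1 s3
| tens_cat s1 s2 s1' s2' :
    tens_eq s1 s1' -> tens_eq s2 s2' -> tens_eq (s1 ++ s2) (s1' ++ s2')
| tens_perm s s' : perm_eq s s' -> tens_eq s s'
| tens_zero n : tens_eq [:: (0, n)] [::]
| tens_addl m m' n : P m -> P m' ->
    tens_eq [:: (m + m', n)] [:: (m, n); (m', n)]
| tens_addr m n n' : P m -> tens_eq [:: (m, n + n')] [:: (m, n); (m, n')]
| tens_bal m a n : P m -> tens_eq [:: (ract m a, n)] [:: (m, lact a n)]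
| tens_kill m n : Z m -> tens_eq [:: (m, n)] [::].
End Tensor.

Section Tensor3.
Variables (R : nzRingType) (M N L : zmodType).
Variables (ractM : M -> R -> M) (lactN : R -> N -> N) (ractN : N -> R -> N)
          (lactL : R -> L -> L).
Variable (P : M -> Prop).

Inductive tens3_eq : seq (M * N * L) -> seq (M * N * L) -> Prop :=
| tens3_refl s : tens3_eq s s
| tens3_sym s s' : tens3_eq s s' -> tens3_eq s' s
| tens3_trans s1 s2 s3 : tens3_eq s1 s2 -> tens3_eq s2 s3 -> tens3_eq s1 s3
| tens3_cat s1 s2 s1' s2' :
    tens3_eq s1 s1' -> tens3_eq s2 s2' -> tens3_eq (s1 ++ s2) (s1' ++ s2')
| tens3_perm s s' : perm_eq s s' -> tens3_eq s s'
| tens3_zero n l : tens3_eq [:: (0, n, l)] [::]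
| tens3_add1 m m' n l : P m -> P m' ->
    tens3_eq [:: (m + m', n, l)] [:: (m, n, l); (m', n, l)]
| tens3_add2 m n n' l : P m ->
    tens3_eq [:: (m, n + n', l)] [:: (m, n, l); (m, n', l)]
| tens3_add3 m n l l' : P m ->
    tens3_eq [:: (m, n, l + l')] [:: (m, n, l); (m, n, l')]
| tens3_bal1 m a n l : P m ->
    tens3_eq [:: (ractM m a, n, l)] [:: (m, lactN a n, l)]
| tens3_bal2 m n a l : P m ->
    tens3_eq [:: (m, ractN n a, l)] [:: (m, n, lactL a l)].
End Tensor3.

Definition is_rmodule (R : nzRingType) (M : zmodType) (ract : M -> R -> M) :=
  [/\ forall x y a, ract (x + y) a = ract x a + ract y a,
      forall x a b, ract x (a + b) = ract x a + ract x b,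
      forall x a b, ract x (a * b) = ract (ract x a) b &
      forall x, ract x 1 = x].

Definition is_rsubmodule (R : nzRingType) (M : zmodType) (ract : M -> R -> M)
  (P : M -> Prop) :=
  [/\ P 0, forall x y, P x -> P y -> P (x - y) &
      forall x a, P x -> P (ract x a)].

(* N (with left action lact) is flat: for every right R-module M and every
   submodule P of M, the natural map P (x)_R N -> M (x)_R N is injective. *)
Definition flat_left (R : nzRingType) (N : zmodType) (lact : R -> N -> N) :=
  forall (M : zmodType) (ract : M -> R -> M), is_rmodule ract ->
  forall P : M -> Prop, is_rsubmodule ract P ->
  forall s : seq (M * N), (forall p, p \in s -> P p.1) ->
    tens_eq ract lact (fun _ => True) (fun _ => False) s [::] ->
    tens_eq ract lact P (fun _ => False) s [::].

(* The comultiplication Delta : H -> H (x)_A H is given by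
   a function D choosing a representative formal sum D x = [:: (x_1, x_2); ..]
   of Delta(x); all axioms are stated up to equality in the tensor product. *)
Section Bialgebroid.
Variables (k : fieldType) (A H : algType k).
Variables (s t : A -> H) (D : H -> seq (H * H)) (eps : H -> A).

(* bimodule structure a.h.b = s(a) t(b) h *)
Definition lactH (a : A) (h : H) : H := s a * h.
Definition ractH (h : H) (a : A) : H := t a * h.

Definition teqH := tens_eq ractH lactH (fun _ => True) (fun _ => False).
Definition teqH3 := tens3_eq ractH lactH ractH lactH (fun _ => True).

Definition left_bialgebroid :=
  [/\ (forall c a b, s (c *: a + b) = c *: s a + s b),
      (forall a b, s (a * b) = s a * s b) & s 1 = 1] /\
  [/\ (forall c a b, t (c *: a + b) = c *: t a + t b),
      (forall a b, t (a * b) = t b * t a), t 1 = 1 &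
      forall a b, s a * t b = t b * s a] /\
  [/\ (forall c x y, teqH (D (c *: x + y))
                          ([seq (c *: p.1, p.2) | p <- D x] ++ D y)),
      (forall a b h, teqH (D (s a * t b * h))
                          [seq (s a * p.1, t b * p.2) | p <- D h]),
      (forall c x y, eps (c *: x + y) = c *: eps x + eps y) &
      (forall a b h, eps (s a * t b * h) = a * eps h * b)] /\
  [/\ (forall x, teqH3
         (flatten [seq [seq (q.1, q.2, p.2) | q <- D p.1] | p <- D x])
         (flatten [seq [seq (p.1, q.1, q.2) | q <- D p.2] | p <- D x])),
      (forall x, \sum_(p <- D x) s (eps p.1) * p.2 = x),
      (forall x, \sum_(p <- D x) t (eps p.2) * p.1 = x),
  (* Delta lands in the Takeuchi product *)
      (forall x a, teqH [seq (p.1 * t a, p.2) | p <- D x]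
                        [seq (p.1, p.2 * s a) | p <- D x]) &
      (forall x y, teqH (D (x * y))
                        [seq (p.1 * q.1, p.2 * q.2) | p <- D x, q <- D y])] /\
  [/\ teqH (D 1) [:: (1, 1)],
      (forall x y, eps (x * s (eps y)) = eps (x * y)),
      (forall x y, eps (x * t (eps y)) = eps (x * y)) &
      eps 1 = 1].

Definition left_ideal_coideal (I : H -> Prop) :=
  [/\ I 0, (forall c x y, I x -> I y -> I (c *: x + y)),
      (forall h x, I x -> I (h * x)),
      (forall x, I x -> eps x = 0) &
      (forall x, I x -> exists l : seq (H * H),
          (forall p, p \in l -> I p.1 \/ I p.2) /\ teqH (D x) l)].

(* H^{co H/I}: x with  sum pi(x_1) (x) x_2 = pi(1) (x) x  in  H/I (x)_A H
   (H/I is a right A-module via pi(h).a = pi(t(a) h)). *)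
Definition coinv (I : H -> Prop) (x : H) : Prop :=
  tens_eq ractH lactH (fun _ => True) I (D x) [:: (1, x)].

Definition HBplus (B : H -> Prop) (x : H) : Prop :=
  exists l : seq (H * H), (forall p, p \in l -> B p.2 /\ eps p.2 = 0) /\
    x = \sum_(p <- l) p.1 * p.2.

(* right H-comodule A^o-subring via t, with coaction delta : B -> B (x)_A H
   (represented by delta : H -> seq (H * H), only used on B). *)
Definition comodule_subring (B : H -> Prop) (delta : H -> seq (H * H)) :=
  let teqB := tens_eq ractH lactH B (fun _ => False) in
  [/\
      B 1, (forall c x y, B x -> B y -> B (c *: x + y)),
      (forall x y, B x -> B y -> B (x * y)),
      (forall a, B (t a)) &
      (forall b, B b -> forall p, p \in delta b -> B p.1)] /\
  [/\
      (forall b b', B b -> B b' -> teqB (delta (b + b')) (delta b ++ delta b')),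
      (forall a b, B b -> teqB (delta (t a * b))
                               [seq (p.1, t a * p.2) | p <- delta b]),
      (forall b, B b -> tens3_eq ractH lactH ractH lactH B
         (flatten [seq [seq (q.1, q.2, p.2) | q <- delta p.1] | p <- delta b])
         (flatten [seq [seq (p.1, q.1, q.2) | q <- D p.2] | p <- delta b])),
      (forall b, B b -> \sum_(p <- delta b) t (eps p.2) * p.1 = b) &
      (forall b, B b -> teqH (delta b) (D b))].
End Bialgebroid.

(* Identities in tensor products over A are used by evaluating them along
   A-balanced maps [tens_eq_sum]; where an actual module is needed, (H/I) (x)_A H
   is built as a quotient type [tensor].

   (2) An element b of B has coaction legs in B, and b' - t(eps b') lies in
   B^+ for b' in B, so sum b_1 (x) b_2 = 1 (x) sum s(eps b_1) b_2 = 1 (x) b modulo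
   HB^+.  Conversely, if x is coinvariant modulo a left ideal Z then applying
   m (x) n |-> t(eps n) m gives x - t(eps x) in Z, so the coinvariants killed
   by eps lie in Z.

   (1) By the converse just stated HB^+ is contained in I, whence one inclusion.
   For the other, the defect d(x) = sum pi(x_1) (x) x_2 - pi(1) (x) x is a right
   A-linear map H -> (H/I) (x)_A H with kernel B.  Coassociativity and the
   coinvariance of b give sum d(b_1) (x) b_2 = 0 in ((H/I) (x)_A H) (x)_A H;
   flatness of H over A moves this identity into d(H) (x)_A H, and the map
   d(x) (x) n |-> (x - t(eps x)) (x) n, well defined because it vanishes for x in
   B, carries it to sum b_1 (x) b_2 - 1 (x) b = 0 in (H/HB^+) (x)_A H. *)

From HB Require Import structures.
From mathcomp Require Import all_boot all_algebra.
From Stdlib Require Import ClassicalEpsilon.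
Set Implicit Arguments. Unset Strict Implicit. Unset Printing Implicit Defensive.
Import GRing.Theory.
Local Open Scope ring_scope.
Local Open Scope quotient_scope.

Lemma morphB (U V : zmodType) (phi : U -> V) :
  {morph phi : x y / x + y} -> {morph phi : x y / x - y}.
Proof. by move=> phiD x y; rewrite -[in RHS](subrK y x) [in RHS]phiD addrK. Qed.

Lemma morph0 (U V : zmodType) (phi : U -> V) : {morph phi : x y / x + y} -> phi 0 = 0.
Proof. by move=> phiD; rewrite -(subrr 0) (morphB phiD) subrr. Qed.

Section BalancedMaps.
Variables (R : nzRingType) (M N V : zmodType).
Variables (ract : M -> R -> M) (lact : R -> N -> N) (P Z : M -> Prop).

Definition balanced_on (F : M -> N -> V) :=
  [/\ forall n, F 0 n = 0,
      forall m m' n, P m -> P m' -> F (m + m') n = F m n + F m' n,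
      forall m n n', P m -> F m (n + n') = F m n + F m n' &
      forall m a n, P m -> F (ract m a) n = F m (lact a n)].

Definition tsum (F : M -> N -> V) (u : seq (M * N)) := \sum_(p <- u) F p.1 p.2.

Lemma tsum_cat F u v : tsum F (u ++ v) = tsum F u + tsum F v.
Proof. exact: big_cat. Qed.

Lemma tsum_map (T : Type) F (g : T -> M * N) (u : seq T) :
  tsum F (map g u) = \sum_(p <- u) F (g p).1 (g p).2.
Proof. exact: big_map. Qed.

Lemma tens_eq_sum_mod (IV : V -> Prop) F u v :
  IV 0 -> (forall x y, IV x -> IV y -> IV (x - y)) ->
  balanced_on F -> (forall m n, Z m -> IV (F m n)) ->
  tens_eq ract lact P Z u v -> IV (tsum F u - tsum F v).
Proof.
move=> IV0 IVB [F0 FDl FDr Fbal] FZ.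
have IVD x y : IV x -> IV y -> IV (x + y).
  by move=> Ix Iy; rewrite -[y]opprK -[- y]sub0r; apply/(IVB _ _ Ix)/IVB.
elim=> {u v} [u|u v _ IVuv|u1 u2 u3 _ IV12 _ IV23|u1 u2 v1 v2 _ IVu _ IVv
  |u v uv|n|m m' n Pm Pm'|m n n' Pm|m a n Pm|m n Zm].
- by rewrite subrr.
- by rewrite -opprB -sub0r; apply: IVB.
- by rewrite -(subrKA (tsum F u2)); apply: IVD.
- by rewrite !tsum_cat opprD addrACA; apply: IVD.
- by rewrite /tsum (perm_big _ uv) subrr.
- by rewrite /tsum big_seq1 big_nil F0 subrr.
- by rewrite /tsum !big_cons !big_nil /= FDl // !addr0 subrr.
- by rewrite /tsum !big_cons !big_nil /= FDr // !addr0 subrr.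
- by rewrite /tsum !big_seq1 /= Fbal // subrr.
- by rewrite /tsum big_seq1 big_nil subr0; apply: FZ.
Qed.

Lemma tens_eq_sum F u v : balanced_on F -> (forall m n, Z m -> F m n = 0) ->
  tens_eq ract lact P Z u v -> tsum F u = tsum F v.
Proof.
move=> Fbal FZ uv; apply/eqP; rewrite -subr_eq0; apply/eqP.
by apply: (tens_eq_sum_mod (IV := eq^~ 0)) uv => // x y -> ->; rewrite subr0.
Qed.
End BalancedMaps.

Section BalancedMaps3.
Variables (R : nzRingType) (M N L V : zmodType).
Variables (ractM : M -> R -> M) (lactN : R -> N -> N) (ractN : N -> R -> N)
  (lactL : R -> L -> L) (P : M -> Prop) (F : M -> N -> L -> V).
Hypotheses
  (F0 : forall n l, F 0 n l = 0)
  (FD1 : forall m m' n l, P m -> P m' -> F (m + m') n l = F m n l + F m' n l)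
  (FD2 : forall m n n' l, P m -> F m (n + n') l = F m n l + F m n' l)
  (FD3 : forall m n l l', P m -> F m n (l + l') = F m n l + F m n l')
  (Fbal1 : forall m a n l, P m -> F (ractM m a) n l = F m (lactN a n) l)
  (Fbal2 : forall m n a l, P m -> F m (ractN n a) l = F m n (lactL a l)).

Lemma tens3_eq_sum u v : tens3_eq ractM lactN ractN lactL P u v ->
  \sum_(p <- u) F p.1.1 p.1.2 p.2 = \sum_(p <- v) F p.1.1 p.1.2 p.2.
Proof.
elim=> {u v} [u|u v _ ->|u1 u2 u3 _ -> _ ->|u1 u2 v1 v2 _ eq_u _ eq_v
  |u v uv|n l|m m' n l Pm Pm'|m n n' l Pm|m n l l' Pm|m a n l Pm|m n a l Pm] //.
- by rewrite !big_cat eq_u eq_v.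
- exact: perm_big.
- by rewrite big_seq1 big_nil F0.
- by rewrite big_seq1 !big_cons big_nil addr0 FD1.
- by rewrite big_seq1 !big_cons big_nil addr0 FD2.
- by rewrite big_seq1 !big_cons big_nil addr0 FD3.
- by rewrite !big_seq1 Fbal1.
- by rewrite !big_seq1 Fbal2.
Qed.
End BalancedMaps3.

Section TensorQuotient.
Variables (R : nzRingType) (M N : zmodType).
Variables (ract : M -> R -> M) (lact : R -> N -> N) (Z : M -> Prop).
Local Notation teq := (tens_eq ract lact (fun _ => True) Z).

Definition tens_eqb u v : bool :=
  if excluded_middle_informative (teq u v) then true else false.

Lemma tens_eqbP u v : reflect (teq u v) (tens_eqb u v).
Proof. by rewrite /tens_eqb; case: excluded_middle_informative => uv; constructor. Qed.

Lemma tens_eqb_is_equiv : equiv_class_of tens_eqb.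
Proof.
split=> [u|u v|v u w]; first exact/tens_eqbP/tens_refl.
  by apply/tens_eqbP/tens_eqbP; apply: tens_sym.
by move=> /tens_eqbP uv /tens_eqbP vw; apply/tens_eqbP/(tens_trans uv vw).
Qed.

Canonical tens_eqb_equiv := EquivRelPack tens_eqb_is_equiv.
Canonical tens_eqb_encModRel := defaultEncModRel tens_eqb.

Definition tensor := {eq_quot tens_eqb}.
HB.instance Definition _ : EqQuotient _ tens_eqb tensor := EqQuotient.on tensor.
HB.instance Definition _ := Choice.on tensor.

Lemma tens_eq_pi u v : teq u v <-> \pi_tensor u = \pi_tensor v.
Proof. by split=> [/tens_eqbP/eqmodP | /eqmodP/tens_eqbP]. Qed.

Lemma tens_eq_repr u : teq (repr (\pi_tensor u)) u.
Proof. by apply/tens_eq_pi; rewrite reprK. Qed.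

Definition tensor_zero : tensor := lift_cst tensor [::].
Definition tensor_add := lift_op2 tensor (@cat (M * N)).
Definition tensor_opp (X : tensor) : tensor :=
  \pi_tensor (map (fun p => (- p.1, p.2)) (repr X)).

Canonical pi_tensor_zero_morph := PiConst tensor_zero.

Lemma pi_tensor_add : {morph \pi_tensor : u v / u ++ v >-> tensor_add u v}.
Proof.
move=> u v; unlock tensor_add; apply/tens_eq_pi.
by apply: tens_cat; apply: tens_sym; apply: tens_eq_repr.
Qed.
Canonical pi_tensor_add_morph := PiMorph2 pi_tensor_add.

Lemma tensor_addA : associative tensor_add.
Proof. by move=> X Y W; rewrite -[X]reprK -[Y]reprK -[W]reprK !piE catA. Qed.

Lemma tensor_addC : commutative tensor_add.
Proof.
move=> X Y; rewrite -[X]reprK -[Y]reprK !piE.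
by apply/tens_eq_pi/tens_perm; rewrite perm_catC.
Qed.

Lemma tensor_add0 : left_id tensor_zero tensor_add.
Proof. by move=> X; rewrite -[X]reprK !piE. Qed.

Lemma tens_eq_addN (u : seq (M * N)) :
  teq (map (fun p => (- p.1, p.2)) u ++ u) [::].
Proof.
elim: u => [|[m n] u IH] /=; first exact: tens_refl.
have cancel_mn : teq [:: (- m, n); (m, n)] [::].
  apply: tens_trans (tens_sym (tens_addl _ _ _ _ I I)) _.
  by rewrite addNr; apply: tens_zero.
apply: tens_trans (tens_cat cancel_mn IH); apply: tens_perm.
by rewrite -(cat1s (m, n) u) perm_cons perm_catCA.
Qed.

Lemma tensor_addN : left_inverse tensor_zero tensor_opp tensor_add.
Proof.
move=> X; rewrite -[X in tensor_add _ X]reprK /tensor_opp -pi_tensor_add.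
by rewrite piE; apply/tens_eq_pi/tens_eq_addN.
Qed.

HB.instance Definition _ :=
  GRing.isZmodule.Build tensor tensor_addA tensor_addC tensor_add0 tensor_addN.

Lemma pi_tensor_nil : \pi_tensor [::] = 0.
Proof. by rewrite piE. Qed.

Lemma pi_tensor_cat u v : \pi_tensor (u ++ v) = \pi_tensor u + \pi_tensor v.
Proof. by rewrite piE. Qed.

Definition tens (m : M) (n : N) : tensor := \pi [:: (m, n)].

Lemma pi_tensorE u : \pi_tensor u = tsum tens u.
Proof.
elim: u => [|p u IH]; first by rewrite /tsum big_nil pi_tensor_nil.
rewrite /tsum big_cons -/(tsum tens u) -IH -cat1s pi_tensor_cat.
by rewrite /tens -surjective_pairing.
Qed.

Lemma tens0l n : tens 0 n = 0.
Proof. by rewrite -pi_tensor_nil; apply/tens_eq_pi/tens_zero. Qed.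

Lemma tensDl n : {morph tens^~ n : m m' / m + m'}.
Proof. by move=> m m'; rewrite -pi_tensor_cat; apply/tens_eq_pi/tens_addl. Qed.

Lemma tensDr m : {morph tens m : n n' / n + n'}.
Proof. by move=> n n'; rewrite -pi_tensor_cat; apply/tens_eq_pi/tens_addr. Qed.

Lemma tens0r m : tens m 0 = 0.
Proof. exact: morph0 (tensDr m). Qed.

Lemma tens_ract m a n : tens (ract m a) n = tens m (lact a n).
Proof. exact/tens_eq_pi/tens_bal. Qed.

Lemma tens_Z m n : Z m -> tens m n = 0.
Proof. by move=> Zm; rewrite -pi_tensor_nil; apply/tens_eq_pi/tens_kill. Qed.

Lemma tens_balanced : balanced_on ract lact (fun _ => True) tens.
Proof. by split=> *; rewrite ?tens0l ?tensDl ?tensDr ?tens_ract. Qed.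

Lemma tens_suml (I : Type) (r : seq I) (F : I -> M) n :
  tens (\sum_(i <- r) F i) n = \sum_(i <- r) tens (F i) n.
Proof. exact: (big_morph _ (tensDl n) (tens0l n)). Qed.

Lemma tens_sumr (I : Type) (r : seq I) m (F : I -> N) :
  tens m (\sum_(i <- r) F i) = \sum_(i <- r) tens m (F i).
Proof. exact: (big_morph _ (tensDr m) (tens0r m)). Qed.

Lemma tens_eqE u v : teq u v <-> tsum tens u = tsum tens v.
Proof. by rewrite -!pi_tensorE; apply: tens_eq_pi. Qed.

End TensorQuotient.

Section LeftIdeal.
Variables (k : fieldType) (A H : algType k) (eps : H -> A).

Definition left_ideal (Z : H -> Prop) :=
  [/\ Z 0, forall x y, Z x -> Z y -> Z (x - y) & forall h x, Z x -> Z (h * x)].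

Lemma left_ideal_coidealW s t D Z :
  left_ideal_coideal s t D eps Z -> left_ideal Z.
Proof.
case=> Z0 Zlin ZM _ _; split=> // x y Zx Zy.
by rewrite -scaleN1r addrC; apply: Zlin.
Qed.

Lemma HBplus_left_ideal B : left_ideal (HBplus eps B).
Proof.
split.
- by exists [::]; rewrite big_nil.
- move=> _ _ [u [uB ->]] [v [vB ->]].
  exists (u ++ [seq (- p.1, p.2) | p <- v]); split.
    by move=> p; rewrite mem_cat => /orP[/uB|/mapP[q /vB ? ->]].
  rewrite big_cat big_map -sumrN; congr (_ + _).
  by apply: eq_bigr => p _; rewrite mulNr.
- move=> h _ [u [uB ->]]; exists [seq (h * p.1, p.2) | p <- u]; split.
    by move=> _ /mapP[p /uB ? ->].
  by rewrite big_map mulr_sumr; apply: eq_bigr => p _; rewrite mulrA.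
Qed.

Lemma HBplus_in (B : H -> Prop) x : B x -> eps x = 0 -> HBplus eps B x.
Proof.
move=> Bx x0; exists [:: (1, x)]; split; last by rewrite big_seq1 mul1r.
by move=> p; rewrite inE => /eqP ->.
Qed.

Lemma HBplusS (B B' : H -> Prop) x :
  (forall b, B b -> B' b) -> HBplus eps B x -> HBplus eps B' x.
Proof. by move=> BB' [u [uB ->]]; exists u; split=> // p /uB [/BB']. Qed.

Lemma HBplus_min (B Z : H -> Prop) x : left_ideal Z ->
  (forall b, B b -> eps b = 0 -> Z b) -> HBplus eps B x -> Z x.
Proof.
move=> [Z0 ZB ZM] BZ [u [uB ->]].
have ZD y z : Z y -> Z z -> Z (y + z).
  by move=> Zy Zz; rewrite -[z]opprK -[- z]sub0r; apply/ZB/ZB.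
elim: u uB => [|p u IH] uB; first by rewrite big_nil.
rewrite big_cons; apply: ZD.
  by have [Bp ep] := uB p (mem_head _ _); apply/ZM/BZ.
by apply: IH => q q_u; apply: uB; rewrite inE q_u orbT.
Qed.
End LeftIdeal.

Section Bialgebroid.
Variables (k : fieldType) (A H : algType k).
Variables (s t : A -> H) (D : H -> seq (H * H)) (eps : H -> A).
Hypothesis Hb : left_bialgebroid s t D eps.

Local Notation balancedH := (balanced_on (ractH t) (lactH s) (fun _ => True)).
Local Notation tensH Z := (tens (ractH t) (lactH s) Z).

Lemma sD : {morph s : a b / a + b}.
Proof. by case: Hb => [[sl _ _] _] a b; have := sl 1 a b; rewrite !scale1r. Qed.
Lemma sM a b : s (a * b) = s a * s b.
Proof. by case: Hb => [[_ -> _] _]. Qed.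
Lemma s1 : s 1 = 1.
Proof. by case: Hb => [[_ _ ->] _]. Qed.
Lemma tD : {morph t : a b / a + b}.
Proof. by case: Hb => [_ [[tl _ _ _] _]] a b; have := tl 1 a b; rewrite !scale1r. Qed.
Lemma tM a b : t (a * b) = t b * t a.
Proof. by case: Hb => [_ [[_ -> _ _] _]]. Qed.
Lemma t1 : t 1 = 1.
Proof. by case: Hb => [_ [[_ _ -> _] _]]. Qed.
Lemma stC a b : s a * t b = t b * s a.
Proof. by case: Hb => [_ [[_ _ _ ->] _]]. Qed.
Lemma D_lin c x y :
  teqH s t (D (c *: x + y)) ([seq (c *: p.1, p.2) | p <- D x] ++ D y).
Proof. by case: Hb => [_ [_ [[h _ _ _] _]]]; apply: h. Qed.
Lemma D_st a b x : teqH s t (D (s a * t b * x)) [seq (s a * p.1, t b * p.2) | p <- D x].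
Proof. by case: Hb => [_ [_ [[_ h _ _] _]]]; apply: h. Qed.
Lemma epsD : {morph eps : x y / x + y}.
Proof.
by case: Hb => [_ [_ [[_ _ el _] _]]] x y; have := el 1 x y; rewrite !scale1r.
Qed.
Lemma eps_st a b x : eps (s a * t b * x) = a * eps x * b.
Proof. by case: Hb => [_ [_ [[_ _ _ ->] _]]]. Qed.
Lemma coass x : teqH3 s t
  (flatten [seq [seq (q.1, q.2, p.2) | q <- D p.1] | p <- D x])
  (flatten [seq [seq (p.1, q.1, q.2) | q <- D p.2] | p <- D x]).
Proof. by case: Hb => [_ [_ [_ [[h _ _ _ _] _]]]]; apply: h. Qed.
Lemma counitl x : \sum_(p <- D x) s (eps p.1) * p.2 = x.
Proof. by case: Hb => [_ [_ [_ [[_ -> _ _ _] _]]]]. Qed.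
Lemma counitr x : \sum_(p <- D x) t (eps p.2) * p.1 = x.
Proof. by case: Hb => [_ [_ [_ [[_ _ -> _ _] _]]]]. Qed.
Lemma D1 : teqH s t (D 1) [:: (1, 1)].
Proof. by case: Hb => [_ [_ [_ [_ [h _ _ _]]]]]; apply: h. Qed.
Lemma eps1 : eps 1 = 1.
Proof. by case: Hb => [_ [_ [_ [_ [_ _ _ ->]]]]]. Qed.

Lemma eps_t a x : eps (t a * x) = eps x * a.
Proof. by have := eps_st 1 a x; rewrite s1 !mul1r. Qed.
Lemma eps_s a x : eps (s a * x) = a * eps x.
Proof. by have := eps_st a 1 x; rewrite t1 !mulr1. Qed.
Lemma eps_t1 a : eps (t a) = a.
Proof. by have := eps_t a 1; rewrite mulr1 eps1 mul1r. Qed.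

Lemma teqH_sum (V : zmodType) (F : H -> H -> V) u v :
  balancedH F -> teqH s t u v -> tsum F u = tsum F v.
Proof. by move=> Fbal; apply: tens_eq_sum. Qed.

Lemma tsumD_add (V : zmodType) (F : H -> H -> V) : balancedH F ->
  {morph (fun x => tsum F (D x)) : x y / x + y}.
Proof.
move=> Fbal x y /=; have := D_lin 1 x y; rewrite scale1r.
move/(teqH_sum Fbal) ->; rewrite tsum_cat tsum_map.
by under eq_bigr do rewrite scale1r -surjective_pairing.
Qed.

Lemma tsumD_st (V : zmodType) a b (F : H -> H -> V) x : balancedH F ->
  tsum F (D (s a * t b * x)) = \sum_(p <- D x) F (s a * p.1) (t b * p.2).
Proof. by move=> Fbal; rewrite (teqH_sum Fbal (D_st a b x)) tsum_map. Qed.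

Lemma tsumD_t (V : zmodType) a (F : H -> H -> V) x : balancedH F ->
  tsum F (D (t a * x)) = \sum_(p <- D x) F p.1 (t a * p.2).
Proof.
move=> /(tsumD_st 1 a x); rewrite s1 mul1r => ->.
by apply: eq_bigr => p _; rewrite mul1r.
Qed.

Lemma tsumD_s (V : zmodType) a (F : H -> H -> V) x : balancedH F ->
  tsum F (D (s a * x)) = \sum_(p <- D x) F (s a * p.1) p.2.
Proof.
move=> /(tsumD_st a 1 x); rewrite t1 mulr1 => ->.
by apply: eq_bigr => p _; rewrite mul1r.
Qed.

Lemma tsumD1 (V : zmodType) (F : H -> H -> V) : balancedH F -> tsum F (D 1) = F 1 1.
Proof. by move=> Fbal; rewrite (teqH_sum Fbal D1) /tsum big_seq1. Qed.

Lemma counit_balanced : balancedH (fun m n => s (eps m) * n).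
Proof.
split=> [n|m m' n _ _|m n n' _|m a n _].
- by rewrite (morph0 epsD) (morph0 sD) mul0r.
- by rewrite epsD sD mulrDl.
- by rewrite mulrDr.
- by rewrite /ractH /lactH eps_t sM mulrA.
Qed.

Lemma coinv_sub_t_eps Z x : left_ideal Z -> coinv s t D Z x -> Z (x - t (eps x)).
Proof.
move=> [Z0 ZB ZM] coinv_x.
have Fbal : balancedH (fun m n => t (eps n) * m).
  split=> [n|m m' n _ _|m n n' _|m a n _].
  - by rewrite mulr0.
  - by rewrite mulrDr.
  - by rewrite epsD tD mulrDl.
  - by rewrite /ractH /lactH eps_s tM mulrA.
have := tens_eq_sum_mod Z0 ZB Fbal _ coinv_x.
by rewrite /tsum counitr big_seq1 /= mulr1; apply=> m n /ZM.
Qed.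

Lemma coinv_eps0 Z x : left_ideal Z -> coinv s t D Z x -> eps x = 0 -> Z x.
Proof.
move=> Zideal /(coinv_sub_t_eps Zideal) + eps_x.
by rewrite eps_x (morph0 tD) subr0.
Qed.

Lemma tens_t Z a n : tensH Z (t a) n = tensH Z 1 (s a * n).
Proof. by rewrite -[t a]mulr1 -/(ractH t 1 a) tens_ract. Qed.

Lemma tens_t_eps Z c n : Z (c - t (eps c)) -> tensH Z c n = tensH Z 1 (s (eps c) * n).
Proof.
by move=> Zc; rewrite -[in LHS](subrK (t (eps c)) c) tensDl tens_Z // add0r tens_t.
Qed.

Lemma tsum_tens_t_eps Z u : (forall p, p \in u -> Z (p.1 - t (eps p.1))) ->
  tsum (tensH Z) u = tensH Z 1 (\sum_(p <- u) s (eps p.1) * p.2).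
Proof.
move=> Zu; rewrite tens_sumr /tsum big_seq_cond [RHS]big_seq_cond.
by apply: eq_bigr => p /andP[/Zu Zp _]; apply: tens_t_eps.
Qed.

Lemma coinvE Z x : coinv s t D Z x <-> tsum (tensH Z) (D x) = tensH Z 1 x.
Proof. by rewrite /coinv tens_eqE /tsum big_seq1. Qed.

Lemma comodule_subring_coinv B delta b : comodule_subring s t D eps B delta ->
  B b -> coinv s t D (HBplus eps B) b.
Proof.
move=> [[_ Blin _ Bt Bdelta] [_ _ _ _ delta_D]] Bb; apply/coinvE.
rewrite -(teqH_sum (tens_balanced _ _ _) (delta_D b Bb)) tsum_tens_t_eps.
  by have := teqH_sum counit_balanced (delta_D b Bb); rewrite /tsum counitl => ->.
move=> p /(Bdelta b Bb) Bp; apply: HBplus_in.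
  by rewrite -scaleN1r addrC; apply: Blin (Bt _) Bp.
by rewrite (morphB epsD) eps_t1 subrr.
Qed.

Lemma comodule_subring_HBplusE B delta x : comodule_subring s t D eps B delta ->
  HBplus eps B x <-> HBplus eps (coinv s t D (HBplus eps B)) x.
Proof.
move=> B_comodule; split.
  by apply: HBplusS => b; apply: comodule_subring_coinv B_comodule.
apply: HBplus_min (HBplus_left_ideal _ _) _ => b.
by apply: coinv_eps0; apply: HBplus_left_ideal.
Qed.
End Bialgebroid.

Section CoinvariantsOfLeftIdeal.
Variables (k : fieldType) (A H : algType k).
Variables (s t : A -> H) (D : H -> seq (H * H)) (eps : H -> A).
Hypothesis Hb : left_bialgebroid s t D eps.
Variable I : H -> Prop.
Hypothesis I_ideal : left_ideal I.

Local Notation balancedH := (balanced_on (ractH t) (lactH s) (fun _ => True)).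
Local Notation B := (coinv s t D I).
Local Notation tensorI := (tensor (ractH t) (lactH s) I).
Local Notation tensI := (tens (ractH t) (lactH s) I).

Definition coinv_defect x : tensorI := tsum tensI (D x) - tensI 1 x.

Lemma coinv_defect_eq0 x : coinv_defect x = 0 <-> B x.
Proof. by rewrite coinvE /coinv_defect; split=> [/subr0_eq|->]; rewrite ?subrr. Qed.

Lemma coinv_defectD : {morph coinv_defect : x y / x + y}.
Proof.
move=> x y; rewrite /coinv_defect (tsumD_add Hb (tens_balanced _ _ _)) tensDr.
by rewrite opprD addrACA.
Qed.

Lemma tensI_tmulr_balanced a : balancedH (fun m n => tensI m (t a * n)).
Proof.
split=> [n|m m' n _ _|m n n' _|m b n _]; rewrite ?tens0l ?tensDl ?mulrDr ?tensDr //.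
by rewrite tens_ract /lactH !mulrA (stC Hb).
Qed.

Lemma coinv_t a : B (t a).
Proof.
apply/coinvE; rewrite -[t a]mulr1 (tsumD_t Hb _ _ (tens_balanced _ _ _)).
by have := tsumD1 Hb (tensI_tmulr_balanced a); rewrite /tsum.
Qed.

Lemma coinv_HBplus_sub_t_eps c : B c -> HBplus eps B (c - t (eps c)).
Proof.
move=> Bc; apply: HBplus_in; last by rewrite (morphB (epsD Hb)) (eps_t1 Hb) subrr.
apply/coinv_defect_eq0; rewrite (morphB coinv_defectD).
by rewrite !(proj2 (coinv_defect_eq0 _)) ?subrr //; apply: coinv_t.
Qed.

Definition ractI (X : tensorI) a : tensorI :=
  tsum (fun m n => tensI m (t a * n)) (repr X).

Lemma ractI_pi u a : ractI (\pi u) a = tsum (fun m n => tensI m (t a * n)) u.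
Proof.
apply: tens_eq_sum (tensI_tmulr_balanced a) _ (tens_eq_repr _ _ _ _) => m n Im.
exact: tens_Z.
Qed.

Lemma ractI_tsum u a : ractI (tsum tensI u) a = tsum (fun m n => tensI m (t a * n)) u.
Proof. by rewrite -pi_tensorE ractI_pi. Qed.

Lemma ractID a : {morph ractI^~ a : X Y / X + Y}.
Proof.
by move=> X Y; rewrite -[X]reprK -[Y]reprK -pi_tensor_cat !ractI_pi tsum_cat.
Qed.

Lemma ractI_tens m n a : ractI (tensI m n) a = tensI m (t a * n).
Proof. by rewrite ractI_pi /tsum big_seq1. Qed.

Lemma ractI_sum (J : Type) (r : seq J) (F : J -> tensorI) a :
  ractI (\sum_(j <- r) F j) a = \sum_(j <- r) ractI (F j) a.
Proof. exact: (big_morph _ (ractID a) (morph0 (ractID a))). Qed.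

Lemma ractI_rmodule : is_rmodule ractI.
Proof.
split=> [X Y a|X a b|X a b|X]; first exact: ractID.
- rewrite -[X]reprK !ractI_pi -big_split /=.
  by apply: eq_bigr => p _; rewrite (tD Hb) mulrDl tensDr.
- rewrite -[X]reprK !ractI_pi /tsum ractI_sum.
  by apply: eq_bigr => p _; rewrite ractI_tens (tM Hb) mulrA.
- rewrite -[X]reprK ractI_pi pi_tensorE.
  by apply: eq_bigr => p _; rewrite (t1 Hb) mul1r.
Qed.

Lemma coinv_defect_tmul a x : coinv_defect (t a * x) = ractI (coinv_defect x) a.
Proof.
rewrite /coinv_defect (morphB (ractID a)) ractI_tsum ractI_tens.
by rewrite (tsumD_t Hb _ _ (tens_balanced _ _ _)).
Qed.

Definition coinv_defects (y : tensorI) := exists x, y = coinv_defect x.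

Lemma coinv_defects_rsubmodule : is_rsubmodule ractI coinv_defects.
Proof.
split=> [|_ _ [x ->] [y ->]|_ a [x ->]].
- by exists 0; rewrite (morph0 coinv_defectD).
- by exists (x - y); rewrite (morphB coinv_defectD).
- by exists (t a * x); rewrite coinv_defect_tmul.
Qed.

Local Notation tensM := (tens ractI (lactH s) (fun _ => False)).

Lemma tensM_tensI_balanced m : balancedH (fun y z => tensM (tensI m y) z).
Proof.
split=> [n|y y' z _ _|y z z' _|y a z _]; rewrite ?tens0r ?tens0l ?tensDr ?tensDl //.
by rewrite -ractI_tens tens_ract.
Qed.

Lemma coinv_defect_tensor b : B b ->
  tsum tensM [seq (coinv_defect p.1, p.2) | p <- D b] = 0.
Proof.
(* Coassociativity turns the first half of the sum into sum Phi(b_1, b_2), and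
   the coinvariance of b turns that into Phi(1, b), the second half. *)
move=> Bb; pose Phi m n := tsum (fun y z => tensM (tensI m y) z) (D n).
have Phi_balanced : balancedH Phi.
  split=> [n|m m' n _ _|m n n' _|m a n _].
  - by rewrite /Phi /tsum big1 // => p _; rewrite !tens0l.
  - by rewrite /Phi /tsum -big_split; apply: eq_bigr => p _; rewrite tensDl tensDl.
  - exact: (tsumD_add Hb (tensM_tensI_balanced m)).
  - rewrite /Phi (tsumD_s Hb _ _ (tensM_tensI_balanced m)).
    by apply: eq_bigr => p _; rewrite tens_ract.
have Phi_coinv : tsum Phi (D b) = Phi 1 b.
  rewrite (tens_eq_sum Phi_balanced _ Bb) /tsum ?big_seq1 // => m n Im.
  by rewrite /Phi /tsum big1 // => p _; rewrite [tensI m _]tens_Z // tens0l.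
have coass_b : \sum_(p <- D b) \sum_(q <- D p.1) tensM (tensI q.1 q.2) p.2 =
                tsum Phi (D b).
  have := tens3_eq_sum (F := fun x y z => tensM (tensI x y) z) _ _ _ _ _ _ (coass Hb b).
  rewrite !big_allpairs_dep; apply=> [*|*|*|*|*|m n a l _].
  - by rewrite !tens0l.
  - by rewrite !tensDl.
  - by rewrite tensDr tensDl.
  - by rewrite tensDr.
  - by rewrite tens_ract.
  - by rewrite -ractI_tens tens_ract.
rewrite tsum_map; under eq_bigr do rewrite (morphB (@tensDl _ _ _ _ _ _ _)) tens_suml.
by rewrite sumrB coass_b Phi_coinv subrr.
Qed.

Local Notation J := (HBplus eps B).
Local Notation tensJ := (tens (ractH t) (lactH s) J).

Definition tens_plus x n := tensJ (x - t (eps x)) n.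

Lemma tens_plus_balanced : balancedH tens_plus.
Proof.
split=> [n|x x' n _ _|x n n' _|x a n _]; rewrite /tens_plus.
- by rewrite (morph0 (epsD Hb)) (morph0 (tD Hb)) subr0 tens0l.
- by rewrite (epsD Hb) (tD Hb) opprD addrACA tensDl.
- by rewrite tensDr.
- by rewrite /ractH (eps_t Hb) (tM Hb) -mulrBr -/(ractH t _ a) tens_ract.
Qed.

Lemma tens_plusBl n : {morph tens_plus^~ n : x y / x - y}.
Proof.
by case: tens_plus_balanced => _ plusDl _ _; apply: morphB => x y; apply: plusDl.
Qed.

Definition defect_lift (y : tensorI) :=
  epsilon (inhabits 0) (fun x => y = coinv_defect x).

Lemma tens_plus_defect_lift x n :
  tens_plus (defect_lift (coinv_defect x)) n = tens_plus x n.
Proof.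
have liftP : coinv_defect x = coinv_defect (defect_lift (coinv_defect x)).
  by apply: (epsilon_spec (inhabits 0) (fun x' => _ = coinv_defect x')); exists x.
apply/subr0_eq; rewrite -tens_plusBl.
apply/tens_Z/coinv_HBplus_sub_t_eps/coinv_defect_eq0.
by rewrite (morphB coinv_defectD) -liftP subrr.
Qed.

Lemma tens_plus_lift_balanced :
  balanced_on ractI (lactH s) coinv_defects (fun y n => tens_plus (defect_lift y) n).
Proof.
have [plus0 plusDl plusDr plus_bal] := tens_plus_balanced.
split=> [n|_ _ n [x ->] [x' ->]|_ n n' [x ->]|_ a n [x ->]].
- by rewrite -(morph0 coinv_defectD) tens_plus_defect_lift plus0.
- by rewrite -coinv_defectD !tens_plus_defect_lift plusDl.
- by rewrite !tens_plus_defect_lift plusDr.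
- by rewrite -coinv_defect_tmul !tens_plus_defect_lift plus_bal.
Qed.

Lemma coinv_HBplus_flat b : flat_left (lactH s) -> B b -> coinv s t D J b.
Proof.
move=> flat Bb.
have defect_tensor : tens_eq ractI (lactH s) (fun _ => True) (fun _ => False)
    [seq (coinv_defect p.1, p.2) | p <- D b] [::].
  by apply/tens_eqE; rewrite coinv_defect_tensor // /tsum big_nil.
have defects_first q : q \in [seq (coinv_defect p.1, p.2) | p <- D b] ->
    coinv_defects q.1.
  by case/mapP=> p _ ->; exists p.1.
move/(flat _ _ ractI_rmodule _ coinv_defects_rsubmodule _ defects_first): defect_tensor.
move/(tens_eq_sum tens_plus_lift_balanced (fun _ _ => False_ind _)).
rewrite tsum_map /tsum big_nil /=.
under eq_bigr do
  rewrite tens_plus_defect_lift /tens_plus (morphB (@tensDl _ _ _ _ _ _ _)) tens_t.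
by rewrite sumrB -tens_sumr (counitl Hb) coinvE => /subr0_eq.
Qed.

Lemma coinv_HBplusE x : flat_left (lactH s) -> B x <-> coinv s t D J x.
Proof.
move=> flat; split; first exact: coinv_HBplus_flat.
have JI y : J y -> I y by apply: HBplus_min => // b; apply: coinv_eps0.
move=> coinv_J; apply/coinvE.
have := tens_eq_sum (tens_balanced (ractH t) (lactH s) I) _ coinv_J.
by rewrite [in tsum _ [:: _]]/tsum big_seq1; apply=> m n /JI; apply: tens_Z.
Qed.
End CoinvariantsOfLeftIdeal.

Theorem theorem2p9 (k : fieldType) (A H : algType k)
  (s t : A -> H) (D : H -> seq (H * H)) (eps : H -> A) :
  left_bialgebroid s t D eps ->
  flat_left (fun (a : A) (h : H) => s a * h) ->
  (forall I : H -> Prop, left_ideal_coideal s t D eps I ->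
     forall x : H, coinv s t D I x <->
                   coinv s t D (HBplus eps (coinv s t D I)) x) /\
  (forall (B : H -> Prop) (delta : H -> seq (H * H)),
     comodule_subring s t D eps B delta ->
     forall x : H, HBplus eps B x <->
                   HBplus eps (coinv s t D (HBplus eps B)) x).
Proof.
move=> Hb flat; split=> [I /left_ideal_coidealW I_ideal x|B delta B_comodule x].
- exact: (coinv_HBplusE Hb I_ideal x flat).
- exact: (comodule_subring_HBplusE Hb x B_comodule).
Qed.
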